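(* Let $l,t,s,x,n$ be integers with $n\geq 2s+1$, $t\geq l$ and $2\leq l\leq x\leq s$. Then $$ex(n,\{K_{l,t},M_{s+1}\},x)\leq (t-1)\binom{x}{l}+(l-1)n-\left\lceil\frac{x(l-1)}{2}\right\rceil+ex(2(s-x)+1,K_{l,t}).$$
   Context: All graphs are finite and simple. $ex(m,K_{l,t})$ is the maximum number of edges of an $m$-vertex graph with no copy of the complete bipartite graph $K_{l,t}$; $M_{s+1}$ is the matching of $s+1$ disjoint edges. For a graph $G$ with matching number at most $s$, say $X\subseteq V(G)$ is admissible if $|X|+\sum_{i=1}^m\lfloor |V(C_i)|/2\rfloor\leq s$, where $C_1,\dots,C_m$ are the components of $G-X$; let $x(G)$ be the maximum size of an admissible set. Let $\mathscr{G}_x$ be the set of graphs on $n$ vertices containing neither $K_{l,t}$ nor $M_{s+1}$ as a subgraph and with $x(G)=x$, and $ex(n,\{K_{l,t},M_{s+1}\},x)=\max_{G\in\mathscr{G}_x}e(G)$. *)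

From mathcomp Require Import all_boot all_order all_algebra.
Set Implicit Arguments. Unset Strict Implicit. Unset Printing Implicit Defensive.

Definition simple_graph (m : nat) (E : {set {set 'I_m}}) : bool :=
  [forall e in E, #|e| == 2].

Definition adj (m : nat) (E : {set {set 'I_m}}) (u v : 'I_m) : bool :=
  [set u; v] \in E.

Definition has_Klt (m l t : nat) (E : {set {set 'I_m}}) : bool :=
  [exists A : {set 'I_m}, exists B : {set 'I_m},
    [&& #|A| == l, #|B| == t, [disjoint A & B] &
        [forall a in A, forall b in B, adj E a b]]].

Definition has_matching (m k : nat) (E : {set {set 'I_m}}) : Prop :=
  exists M : {set {set 'I_m}},
    [/\ M \subset E, #|M| = k &
        forall e f, e \in M -> f \in M -> e != f -> [disjoint e & f]].

Definition ex_Klt (m l t : nat) : nat :=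
  \max_(E : {set {set 'I_m}} |
          simple_graph E && ~~ has_Klt l t E) #|E|.

Definition restr_adj (m : nat) (E : {set {set 'I_m}}) (X : {set 'I_m}) :
  rel 'I_m := fun u v => [&& u \notin X, v \notin X & adj E u v].

Definition components_minus (m : nat) (E : {set {set 'I_m}})
  (X : {set 'I_m}) : {set {set 'I_m}} :=
  [set [set y | connect (restr_adj E X) x y] | x in ~: X].

Definition admissible (m s : nat) (E : {set {set 'I_m}}) (X : {set 'I_m}) :
  bool :=
  #|X| + \sum_(C in components_minus E X) #|C|./2 <= s.

Definition xG (m s : nat) (E : {set {set 'I_m}}) : nat :=
  \max_(X : {set 'I_m} | admissible s E X) #|X|.

From mathcomp Require Import all_boot all_order all_algebra zify.
Set Implicit Arguments. Unset Strict Implicit.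

(* Fix an admissible set X with |X| = x, so that the components C_i of G - X
   satisfy sum_i floor(|C_i|/2) <= s - x.  The edges meeting X are double
   counted through the sets N(v) :&: X, a vertex outside X counting with weight
   2 and a vertex of X with weight 1; as d <= (l - 1) + C(d, l) and an l-subset
   of X has fewer than t common neighbours, 2 e(X, V) <= (2n - x)(l - 1) +
   2 (t - 1) C(x, l).  For the edges of G - X, glue one vertex of every
   component into a single vertex: at most 2(s - x) other vertices remain, no
   edge is lost, and since K_{l,t} has no cut vertex for l, t >= 2, every copy of
   it in the glued graph comes from a single component, so the glued graph is
   K_{l,t}-free on at most 2(s - x) + 1 vertices. *)

Lemma eq_set2 (T : finType) (a b p q : T) : a != b ->
  ([set p; q] == [set a; b]) = (p == a) && (q == b) || (p == b) && (q == a).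
Proof.
move=> nab; apply/idP/idP => [/eqP pq_ab | /orP[] /andP[/eqP-> /eqP->] //].
  have /set2P[p_a|p_b] : p \in [set a; b] by rewrite -pq_ab set21.
    subst p; have : b \in [set a; q] by rewrite pq_ab set22.
    by rewrite !inE eq_sym (negbTE nab) eq_sym /= => ->; rewrite eqxx.
  subst p; have : a \in [set b; q] by rewrite pq_ab set21.
  by rewrite !inE (negbTE nab) eq_sym /= => ->; rewrite eqxx orbT.
by rewrite setUC.
Qed.

Lemma imset_set2 (aT rT : finType) (f : aT -> rT) (u v : aT) :
  f @: [set u; v] = [set f u; f v].
Proof. by rewrite imsetU1 imset_set1. Qed.

Lemma leq_add_bin d l : d <= l + 'C(d, l.+1).
Proof.
elim: d => // d IH; rewrite binS.
by case: (leqP l d) => [|d_lt_l]; [rewrite -bin_gt0|]; lia.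
Qed.

Section Graphs.
Variables (m : nat) (E : {set {set 'I_m}}).

Definition nbrs v := [set u | adj E v u].

Definition edges_meeting (X : {set 'I_m}) := [set e in E | ~~ [disjoint e & X]].
Definition edges_avoiding (X : {set 'I_m}) := [set e in E | [disjoint e & X]].

Lemma card_edges_split X :
  #|E| = #|edges_meeting X| + #|edges_avoiding X|.
Proof.
rewrite -(cardsID [set e : {set 'I_m} | [disjoint e & X]] E) addnC.
by congr (_ + _); apply: eq_card => e; rewrite !inE andbC.
Qed.

Lemma edges_avoiding_sub X : edges_avoiding X \subset E.
Proof. by apply/subsetP => e; rewrite inE => /andP[]. Qed.

Lemma adj_sym u v : adj E u v = adj E v u.
Proof. by rewrite /adj setUC. Qed.

Hypothesis simE : simple_graph E.

Lemma card_edge e : e \in E -> #|e| = 2.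
Proof. by move=> Ee; apply/eqP; move/forall_inP: simE; apply. Qed.

Lemma edgeP e : e \in E -> exists u v, [/\ u != v, e = [set u; v] & adj E u v].
Proof.
move=> Ee; have /cards2P [u [v [nuv e_uv]]] : #|e| == 2 by rewrite card_edge.
by exists u, v; rewrite /adj -e_uv.
Qed.

Lemma adj_irrefl v : ~~ adj E v v.
Proof. by apply/negP => /card_edge; rewrite setUid cards1. Qed.

Lemma handshake (g : 'I_m -> 'I_m -> nat) (h : {set 'I_m} -> nat) :
  (forall u v, u != v -> g u v + g v u = h [set u; v]) ->
  \sum_v \sum_(u | adj E v u) g v u = \sum_(e in E) h e.
Proof.
move=> gh; rewrite pair_big_dep /=.
rewrite (partition_big (fun p : 'I_m * 'I_m => [set p.1; p.2]) (mem E)) //=.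
apply: eq_bigr => e Ee.
have /cards2P [a [b [nab e_ab]]] : #|e| == 2 by rewrite card_edge.
subst e; rewrite -gh // (bigD1 (a, b)) /=; last by rewrite /adj Ee eqxx.
rewrite (bigD1 (b, a)) /=; last first.
  by rewrite /adj setUC Ee eqxx xpair_eqE eq_sym (negbTE nab) andbF.
rewrite big1 ?addn0 // => -[p q] /= /andP[/andP[/andP[_]]].
by rewrite eq_set2 // !xpair_eqE => /orP[] ->.
Qed.

End Graphs.

Lemma sub_has_Klt m l t (E1 E2 : {set {set 'I_m}}) :
  E1 \subset E2 -> has_Klt l t E1 -> has_Klt l t E2.
Proof.
move=> /subsetP sub12 /existsP[A /existsP[B /and4P[cA cB dAB /forall_inP AB]]].
apply/existsP; exists A; apply/existsP; exists B; rewrite cA cB dAB /=.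
apply/forall_inP => a aA; apply/forall_inP => b bB; apply: sub12.
by move/forall_inP: (AB a aA); apply.
Qed.

Section EdgesMeeting.
Variables (m l t : nat) (E : {set {set 'I_m}}) (X : {set 'I_m}).
Hypotheses (simE : simple_graph E) (noK : ~ has_Klt l t E).

Lemma card_common_nbrs_lt (S : {set 'I_m}) :
  #|S| = l -> #|[set v | S \subset nbrs E v]| < t.
Proof.
rewrite ltnNge => cardS; apply/negP => /card_geqP [s [uniq_s size_s s_nbrs]].
apply: noK; apply/existsP; exists S; apply/existsP; exists [set v in s].
rewrite cardS cardsE (card_uniqP uniq_s) size_s !eqxx /=; apply/andP; split.
  apply/pred0P => v /=; apply/negP => /andP[vS]; rewrite inE => /s_nbrs.
  by rewrite inE => /subsetP /(_ v vS); rewrite inE (negbTE (adj_irrefl simE v)).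
apply/forall_inP => a aS; apply/forall_inP => b; rewrite inE => /s_nbrs.
by rewrite inE => /subsetP /(_ a aS); rewrite inE adj_sym.
Qed.

Lemma sum_bin_nbrs : \sum_v 'C(#|nbrs E v :&: X|, l) <= (t - 1) * 'C(#|X|, l).
Proof.
have -> : \sum_v 'C(#|nbrs E v :&: X|, l) =
    \sum_(S : {set 'I_m}) #|[set v | (S \subset nbrs E v :&: X) && (#|S| == l)]|.
  rewrite (eq_bigr (fun v => \sum_(S : {set 'I_m} | (S \subset nbrs E v :&: X) && (#|S| == l)) 1)).
    by rewrite (exchange_big_dep xpredT) //=; apply: eq_bigr => S _; rewrite sum1dep_card.
  by move=> v _; rewrite sum1dep_card cards_draws.
rewrite -cards_draws mulnC -sum_nat_cond_const [leqRHS]big_mkcond /=.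
apply: leq_sum => S _; case: ifP => [/andP[_ /eqP cardS] | S_not_l].
  apply: (@leq_trans #|[set v | S \subset nbrs E v]|).
    by apply/subset_leq_card/subsetP => v; rewrite !inE subsetI => /andP[/andP[]].
  by have := card_common_nbrs_lt cardS; lia.
rewrite leqn0 cards_eq0; apply/eqP/setP => v; rewrite !inE subsetI.
by apply/negbTE; apply: contraFN S_not_l => /andP[/andP[_ ->]].
Qed.

Lemma card_edges_meeting_le : 0 < l ->
  2 * #|edges_meeting E X| + #|X| * l.-1 <=
    2 * (m * l.-1) + 2 * ((t - 1) * 'C(#|X|, l)).
Proof.
move=> l_gt0; pose w v := if v \in X then 1 else 2.
have double_count : \sum_v w v * #|nbrs E v :&: X| = 2 * #|edges_meeting E X|.
  transitivity (\sum_v \sum_(u | adj E v u) w v * (u \in X)).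
    apply: eq_bigr => v _; rewrite -big_distrr /= -sum1_card; congr (_ * _).
    rewrite big_mkcond [RHS]big_mkcond /=; apply: eq_bigr => u _.
    by rewrite !inE; case: (adj E v u); case: (u \in X).
  rewrite (handshake simE (h := fun e => 2 * ~~ [disjoint e & X])); last first.
    move=> u v _; rewrite disjoints_subset subUset !sub1set !inE /w.
    by case: (u \in X); case: (v \in X).
  rewrite -big_distrr /= -sum1_card; congr (_ * _).
  rewrite big_mkcond [RHS]big_mkcond /=.
  by apply: eq_bigr => e _; rewrite inE; case: (e \in E); case: [disjoint e & X].
have per_vertex v : w v * #|nbrs E v :&: X| <=
    w v * l.-1 + 2 * 'C(#|nbrs E v :&: X|, l).
  have := leq_add_bin #|nbrs E v :&: X| l.-1; rewrite prednK //.
  by rewrite /w; case: (v \in X); lia.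
have weights : \sum_v w v + #|X| = 2 * m.
  rewrite -sum1_card [X in _ + X]big_mkcond -big_split /=.
  have -> : 2 * m = \sum_(v : 'I_m) 2 by rewrite sum_nat_const card_ord mulnC.
  by apply: eq_bigr => v _; rewrite /w; case: (v \in X).
have : \sum_v w v * #|nbrs E v :&: X| <=
    \sum_v (w v * l.-1 + 2 * 'C(#|nbrs E v :&: X|, l)).
  by apply: leq_sum => v _; apply: per_vertex.
rewrite big_split /= double_count.
rewrite -big_distrl -big_distrr /=.
have := sum_bin_nbrs; have : (\sum_v w v) * l.-1 + #|X| * l.-1 = 2 * m * l.-1.
  by rewrite -mulnDl weights.
set x := #|X|; set em := #|edges_meeting E X|; set W := \sum_(i < m) w i.
set B := \sum_(i < m) _; move: (l.-1) => L; lia.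
Qed.

End EdgesMeeting.

Lemma exists_neq (T : finType) (A : {set T}) (z : T) :
  1 < #|A| -> exists2 a, a \in A & a != z.
Proof.
move=> A_gt1; have : 0 < #|A :\ z|.
  by move: A_gt1; rewrite (cardsD1 z A); case: (z \in A); lia.
by case/card_gt0P => a; rewrite !inE => /andP[a_z aA]; exists a.
Qed.

Section Gluing.
Variables (m p : nat) (E : {set {set 'I_m}}) (c : rel 'I_m) (f : 'I_m -> 'I_p) (z : 'I_p).
Hypotheses (simE : simple_graph E) (c_sym : symmetric c) (c_trans : transitive c).
Hypothesis adj_c : forall u v, adj E u v -> c u v.
Hypothesis f_inj_c : forall u v, c u v -> f u = f v -> u = v.
Hypothesis f_inj_nz : forall u v, f u = f v -> f u != z -> u = v.

Local Notation F := [set f @: e | e : {set 'I_m} in E].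

Lemma adj_f_neq u v : adj E u v -> f u != f v.
Proof.
move=> uv; apply/eqP => /(f_inj_c (adj_c uv)) u_v.
by rewrite u_v (negbTE (adj_irrefl simE v)) in uv.
Qed.

Lemma simple_glue : simple_graph F.
Proof.
apply/forall_inP => _ /imsetP [e Ee ->]; have [u [v [_ -> uv]]] := edgeP simE Ee.
by rewrite imset_set2 cards2 adj_f_neq.
Qed.

Lemma glue_edge_inj u v u' v' : adj E u v -> adj E u' v' ->
  f u = f u' -> f v = f v' -> u = u' /\ v = v'.
Proof.
move=> uv u'v' fu fv; have c_vu := adj_c uv; rewrite c_sym in c_vu.
case: (f u =P z) => [fu_z | /eqP fu_nz].
  have v_v' : v = v' by apply: f_inj_nz; rewrite // -fu_z eq_sym adj_f_neq.
  split=> //; apply: f_inj_c fu; apply: c_trans (adj_c uv) _.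
  by rewrite v_v' c_sym adj_c.
have u_u' := f_inj_nz fu fu_nz; split=> //; apply: f_inj_c fv.
by apply: c_trans c_vu _; rewrite u_u' adj_c.
Qed.

Lemma card_glue : #|F| = #|E|.
Proof.
apply: card_in_imset => e e' Ee Ee'.
have [u [v [_ -> uv]]] := edgeP simE Ee; have [u' [v' [_ -> u'v']]] := edgeP simE Ee'.
rewrite !imset_set2 => /eqP; rewrite eq_set2 ?adj_f_neq //.
case/orP=> /andP[/eqP fu /eqP fv].
  by have [-> ->] := glue_edge_inj uv u'v' fu fv.
by rewrite adj_sym in u'v'; have [-> ->] := glue_edge_inj uv u'v' fu fv; rewrite setUC.
Qed.

Lemma adj_glueP a b : a != b -> adj F a b ->
  exists u v, [/\ adj E u v, f u = a & f v = b].
Proof.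
move=> nab /imsetP [e Ee ab_fe]; have [u [v [_ e_uv uv]]] := edgeP simE Ee.
move: ab_fe; rewrite e_uv imset_set2 => /eqP; rewrite eq_sym eq_set2 //.
case/orP=> /andP[/eqP fu /eqP fv]; first by exists u, v.
by exists v, u; rewrite adj_sym.
Qed.

Section LiftBiclique.
Variables (A B : {set 'I_p}) (a0 b0 : 'I_p) (p0 : 'I_m).
Hypotheses (AB_disj : [disjoint A & B]) (AB_adj : {in A & B, forall a b, adj F a b}).
Hypotheses (a0A : a0 \in A) (b0B : b0 \in B) (a0_nz : a0 != z) (b0_nz : b0 != z).
Hypothesis fp0 : f p0 = a0.

Lemma lift_edge a b : a \in A -> b \in B ->
  exists u v, [/\ adj E u v, f u = a & f v = b].
Proof.
move=> aA bB; apply: adj_glueP (AB_adj aA bB); apply: contraTneq aA => ->.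
by rewrite (disjointFl AB_disj).
Qed.

Lemma lift_edge_in_class a b u v : a \in A -> b \in B ->
  adj E u v -> f u = a -> f v = b -> c p0 u.
Proof.
move=> aA bB uv fu fv; have [u0 [q0 [u0q0 fu0 fq0]]] := lift_edge a0A b0B.
have u0_p0 : u0 = p0 by apply: f_inj_nz; rewrite fu0 ?fp0.
have c_p0q0 : c p0 q0 by rewrite -u0_p0 adj_c.
case: (a =P z) => [a_z | /eqP a_nz].
  have b_nz : b != z.
    by apply: contraTneq bB => ->; rewrite -a_z (disjointFr AB_disj aA).
  have [u1 [v1 [u1v1 fu1 fv1]]] := lift_edge a0A bB.
  have u1_p0 : u1 = p0 by apply: f_inj_nz; rewrite fu1 ?fp0.
  have v1_v : v1 = v by apply: f_inj_nz; rewrite fv1 ?fv.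
  rewrite u1_p0 v1_v in u1v1.
  by apply: c_trans (adj_c u1v1) _; rewrite c_sym adj_c.
have [u2 [v2 [u2v2 fu2 fv2]]] := lift_edge aA b0B.
have u2_u : u2 = u by apply: f_inj_nz; rewrite fu2 ?fu.
have v2_q0 : v2 = q0 by apply: f_inj_nz; rewrite fv2 ?fq0.
rewrite u2_u v2_q0 in u2v2.
by apply: c_trans c_p0q0 _; rewrite c_sym adj_c.
Qed.

Definition lift a := odflt p0 [pick u | c p0 u && (f u == a)].

Lemma liftP a : a \in A :|: B -> c p0 (lift a) /\ f (lift a) = a.
Proof.
move=> aAB; have [u c_p0u fu] : exists2 u, c p0 u & f u = a.
  case/setUP: aAB => [aA | aB].
    have [u [v [uv fu fv]]] := lift_edge aA b0B.
    by exists u; first exact: lift_edge_in_class aA b0B uv fu fv.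
  have [u [v [uv fu fv]]] := lift_edge a0A aB.
  by exists v; first exact: c_trans (lift_edge_in_class a0A aB uv fu fv) (adj_c uv).
rewrite /lift; case: pickP => [w /andP[c_p0w /eqP fw] | /(_ u)] //=.
by rewrite c_p0u fu eqxx.
Qed.

Lemma lift_inj : {in A :|: B &, injective lift}.
Proof. by move=> a b /liftP[_ fa] /liftP[_ fb] lift_ab; rewrite -fa -fb lift_ab. Qed.

Lemma lift_adj a b : a \in A -> b \in B -> adj E (lift a) (lift b).
Proof.
move=> aA bB; have [u [v [uv fu fv]]] := lift_edge aA bB.
have c_p0u := lift_edge_in_class aA bB uv fu fv.
have [c_a fa] : c p0 (lift a) /\ f (lift a) = a by apply: liftP; rewrite inE aA.
have [c_b fb] : c p0 (lift b) /\ f (lift b) = b by apply: liftP; rewrite inE bB orbT.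
have -> : lift a = u.
  by apply: f_inj_c; rewrite ?fa ?fu // (c_trans _ c_p0u) // c_sym.
have -> // : lift b = v.
apply: f_inj_c; rewrite ?fb ?fv //.
by apply: c_trans (c_trans c_p0u (adj_c uv)); rewrite c_sym.
Qed.

Lemma lift_biclique : has_Klt #|A| #|B| E.
Proof.
have subA : {subset A <= A :|: B} by move=> a aA; rewrite inE aA.
have subB : {subset B <= A :|: B} by move=> b bB; rewrite inE bB orbT.
apply/existsP; exists (lift @: A); apply/existsP; exists (lift @: B).
rewrite !card_in_imset ?eqxx /=; last 2 first.
- by move=> a b /subB aAB /subB bAB; apply: lift_inj.
- by move=> a b /subA aAB /subA bAB; apply: lift_inj.
apply/andP; split.
  rewrite -setI_eq0; apply/eqP/setP => u; rewrite !inE; apply/negbTE/negP.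
  case/andP=> /imsetP[a aA ->] /imsetP[b bB /(lift_inj (subA _ aA) (subB _ bB)) a_b].
  by move: bB; rewrite -a_b (disjointFr AB_disj aA).
apply/forall_inP => _ /imsetP[a aA ->]; apply/forall_inP => _ /imsetP[b bB ->].
exact: lift_adj.
Qed.

End LiftBiclique.

Lemma glue_has_Klt l t : 1 < l -> 1 < t -> has_Klt l t F -> has_Klt l t E.
Proof.
move=> l_gt1 t_gt1 /existsP[A /existsP[B /and4P[/eqP cardA /eqP cardB AB_disj]]].
move=> /forall_inP AB_adj; have AB_adj' : {in A & B, forall a b, adj F a b}.
  by move=> a b aA bB; move/forall_inP: (AB_adj a aA); apply.
have [a0 a0A a0_nz] : exists2 a, a \in A & a != z by apply: exists_neq; rewrite cardA.
have [b0 b0B b0_nz] : exists2 b, b \in B & b != z by apply: exists_neq; rewrite cardB.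
have [p0 [_ [_ fp0 _]]] := lift_edge AB_disj AB_adj' a0A b0B.
by rewrite -cardA -cardB; apply: lift_biclique AB_disj AB_adj' a0A b0B a0_nz b0_nz fp0.
Qed.

End Gluing.

Section Contraction.
Variables (n l t k : nat) (E : {set {set 'I_n}}) (X : {set 'I_n}).
Hypotheses (simE : simple_graph E) (noK : ~ has_Klt l t E).
Hypotheses (l_gt1 : 1 < l) (t_gt1 : 1 < t).
Hypothesis sum_half_comps : \sum_(C in components_minus E X) #|C|./2 <= k.

Local Notation R := (restr_adj E X).

Lemma restr_adj_sym : symmetric R.
Proof. by move=> u v; rewrite /restr_adj adj_sym andbCA. Qed.

Let R_connect_sym := sym_connect_sym restr_adj_sym.

Lemma connect_restr_adj_notin u v : connect R u v -> u != v -> u \notin X.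
Proof.
case/connectP => [[|w s] /=]; first by move=> _ ->; rewrite eqxx.
by case/andP => /and3P[].
Qed.

Lemma components_minus_partition : partition (components_minus E X) (~: X).
Proof.
have -> : components_minus E X = equivalence_partition (connect R) (~: X).
  apply: eq_in_imset => u; rewrite inE => uX; apply/setP => v; rewrite !inE.
  case: (boolP (connect R u v)) => [uv | _]; rewrite ?andbF // andbT.
  case: (v =P u) => [-> // | /eqP vu].
  by apply/esym; apply: (connect_restr_adj_notin _ vu); rewrite R_connect_sym.
apply: equivalence_partitionP => u v w _ _ _ /=; split; first exact: connect0.
by move=> uv; apply: (same_connect R_connect_sym uv).
Qed.

Definition nonroots := [set v | fingraph.root R v != v].

Lemma nonroots_notin v : v \in nonroots -> v \notin X.
Proof. by rewrite inE eq_sym; apply: connect_restr_adj_notin; apply: connect_root. Qed.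

Lemma card_nonroots : #|nonroots| <= 2 * k.
Proof.
have -> : #|nonroots| = \sum_(v in ~: X | v \in nonroots) 1.
  rewrite sum1dep_card; apply: eq_card => v; rewrite [RHS]in_set in_setC.
  by case: (boolP (v \in nonroots)) => [/nonroots_notin -> | _]; rewrite ?andbF.
rewrite (set_partition_big_cond _ components_minus_partition) /=.
apply: leq_trans (_ : \sum_(C in components_minus E X) 2 * #|C|./2 <= _); last first.
  by rewrite -big_distrr leq_mul2l sum_half_comps orbT.
apply: leq_sum => _ /imsetP[u _ ->]; set C := [set v | connect R u v].
have rootC : fingraph.root R u \in C by rewrite inE connect_root.
apply: (@leq_trans #|C :\ fingraph.root R u|).
  rewrite sum1dep_card; apply/subset_leq_card/subsetP => v; rewrite !inE.
  case/andP=> uv root_v; rewrite uv andbT eq_sym.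
  by have /eqP -> : fingraph.root R u == fingraph.root R v by rewrite root_connect.
have := cardsD1 (fingraph.root R u) C; rewrite rootC; have := odd_double_half #|C|.
by rewrite -muln2; case: (odd _) => /=; lia.
Qed.

(* The vertices of X are roots of their (trivial) class, so they go to 0 too. *)
Definition glue v : 'I_(2 * k).+1 :=
  if v \in nonroots then inord (index v (enum nonroots)).+1 else ord0.

Lemma glue_nonroot v : v \in nonroots -> glue v = (index v (enum nonroots)).+1 :> nat.
Proof.
move=> vY; rewrite /glue vY inordK // ltnS; apply: leq_trans card_nonroots.
by rewrite cardE index_mem mem_enum.
Qed.

Lemma glue_eq0 v : (glue v == ord0) = (v \notin nonroots).
Proof.
case: (boolP (v \in nonroots)) => [vY | vY]; last by rewrite /glue (negbTE vY) eqxx.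
by rewrite -(inj_eq val_inj) /= glue_nonroot.
Qed.

Lemma glue_inj_nonroots : {in nonroots &, injective glue}.
Proof.
move=> u v uY vY /(congr1 (@nat_of_ord _)); rewrite !glue_nonroot // => -[].
by move/(congr1 (nth u (enum nonroots))); rewrite !nth_index ?mem_enum.
Qed.

Lemma glue_inj_connect u v : connect R u v -> glue u = glue v -> u = v.
Proof.
move=> uv guv; case: (boolP (u \in nonroots)) => uY; case: (boolP (v \in nonroots)) => vY.
- exact: glue_inj_nonroots.
- by move: (glue_eq0 u) (glue_eq0 v); rewrite guv uY vY => ->.
- by move: (glue_eq0 u) (glue_eq0 v); rewrite guv uY vY => ->.
move: uY vY; rewrite !inE !negbK => /eqP <- /eqP <-.
by apply/eqP; rewrite root_connect.
Qed.

Lemma card_edges_avoiding_le : #|edges_avoiding E X| <= ex_Klt (2 * k).+1 l t.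
Proof.
set EY := edges_avoiding E X.
have simEY : simple_graph EY.
  by apply/forall_inP => e /(subsetP (edges_avoiding_sub E X)) /(card_edge simE) ->.
have adj_connect u v : adj EY u v -> connect R u v.
  rewrite /adj inE disjoints_subset subUset !sub1set !inE => /and3P[uv uX vX].
  by apply: connect1; rewrite /restr_adj uX vX.
have glue_inj_nz u v : glue u = glue v -> glue u != ord0 -> u = v.
  move=> guv; rewrite glue_eq0 negbK => uY; apply: glue_inj_nonroots => //.
  by rewrite -[_ \in _]negbK -glue_eq0 -guv glue_eq0 uY.
have c_trans := @connect_trans _ R.
rewrite -(card_glue simEY R_connect_sym c_trans adj_connect glue_inj_connect glue_inj_nz).
apply: leq_bigmax_cond; rewrite (simple_glue simEY adj_connect glue_inj_connect) //=.
apply/negP => /(glue_has_Klt simEY R_connect_sym c_trans adj_connect glue_inj_connect glue_inj_nz).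
by move=> /(_ l_gt1 t_gt1) /(sub_has_Klt (edges_avoiding_sub E X)).
Qed.

End Contraction.

Lemma admissible_xG m s (E : {set {set 'I_m}}) :
  0 < xG s E -> exists2 X, admissible s E X & #|X| = xG s E.
Proof.
move=> xG_gt0; case: (pickP (admissible s E)) => [X0 admX0 | no_adm]; last first.
  by move: xG_gt0; rewrite /xG big_pred0.
rewrite /xG (bigmax_eq_arg _ admX0).
by case: arg_maxnP => // X admX _; exists X.
Qed.

Unset Implicit Arguments.
Import GRing.Theory Num.Theory.
Local Open Scope ring_scope.

Theorem lemma3p4 (l t s x n : nat) :
  (2 * s + 1 <= n)%N -> (l <= t)%N -> (2 <= l)%N -> (l <= x)%N -> (x <= s)%N ->
  forall E : {set {set 'I_n}},
    simple_graph E -> ~ has_Klt l t E -> ~ has_matching (s + 1) E ->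
    xG s E = x ->
    (#|E| : int) <=
      ((t - 1) * 'C(x, l))%N%:Z + ((l - 1) * n)%N%:Z
      - (uphalf (x * (l - 1)))%:Z
      + (ex_Klt (2 * (s - x) + 1) l t)%:Z.
Proof.
move=> _ l_le_t l_gt1 l_le_x x_le_s E simE noK _ xGE.
have [X admX cardX] : exists2 X, admissible s E X & #|X| = x.
  by rewrite -xGE; apply: admissible_xG; rewrite xGE (leq_trans _ l_le_x) // ltnW.
have sum_half : (\sum_(C in components_minus E X) #|C|./2 <= s - x)%N.
  by move: admX; rewrite /admissible cardX; lia.
have meeting := card_edges_meeting_le X simE noK (ltnW l_gt1).
have avoiding := card_edges_avoiding_le simE noK l_gt1 (leq_trans l_gt1 l_le_t) sum_half.
rewrite (card_edges_split E X) addn1 uphalf_half.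
move: meeting avoiding; rewrite cardX -subn1.
have := odd_double_half (x * (l - 1)); rewrite -muln2.
move: (odd _) ((x * (l - 1))./2) => [] h; rewrite /=; lia.
Qed.
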